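(* Let $Y$ be a $\mathbb C$-vector space. Then the pairing $\langle\sum_{u\in M}A_ux^{-u},\sum_{u\in M}B_ux^u\rangle=\sum_uB_uA_u$ induces an isomorphism $\mathcal K_0(Y)\cong\mathrm{Hom}_{\mathbb C}(\mathcal W_0,Y)$.
   Context: Let $A=\{\mathbf a_1,\dots,\mathbf a_m\}\subseteq\mathbb Z^n$ be linearly independent over $\mathbb R$, with $\mathbf a_j=(a_{1j},\dots,a_{nj})$, and $\ell_1,\dots,\ell_m$ positive integers (part of a relation $\ell_0\mathbf a_0=\sum_j\ell_j\mathbf a_j$, $\ell_0=\sum_j\ell_j$, $\mathbf a_0\in\mathbb Z^n$, $\gcd(\ell_0,\dots,\ell_m)=1$). Let $f_0=\sum_{j=1}^m\ell_jx^{\mathbf a_j}$. Let $V$ be the real span of $A$, $V_{\mathbb Z}=V\cap\mathbb Z^n$, $C(A)$ the real cone generated by $A$, $M=V_{\mathbb Z}\cap C(A)$. Let $S_0$ be the $\mathbb C$-span of $\{x^u:u\in M\}$, $D_{i,0}=x_i\partial/\partial x_i+x_i\partial f_0/\partial x_i$ ($i=1,\dots,n$), and $\mathcal W_0=S_0/\sum_iD_{i,0}S_0$. For a $\mathbb C$-vector space $Y$ let $R_0(Y)$ be the set of formal sums $\xi=\sum_{u\in M}A_ux^{-u}$ with $A_u\in Y$, and define $D^*_{i,0}(\xi)=\sum_{v\in M}\big(v_iA_v+\sum_{j=1}^m\ell_ja_{ij}A_{v+\mathbf a_j}\big)x^{-v}$. Let $\mathcal K_0(Y)=\{\xi\in R_0(Y):D^*_{i,0}(\xi)=0\text{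 for }i=1,\dots,n\}$. *)

From HB Require Import structures.
From mathcomp Require Import all_boot all_order all_algebra.
From mathcomp Require Import boolp reals.
From mathcomp Require Import complex.
From mathcomp Require Import finmap monalg.

Set Implicit Arguments.
Unset Strict Implicit.
Unset Printing Implicit Defensive.

Import Order.TTheory GRing.Theory Num.Theory.
Local Open Scope ring_scope.

Definition Zn (n : nat) := {ffun 'I_n -> int}.

Section Setup.
Variables (R : realType) (n m : nat) (a : 'I_m -> Zn n).

Definition lin_indep : Prop :=
  forall c : 'I_m -> R,
    (forall i : 'I_n, \sum_(j < m) c j * (a j i)%:~R = 0) -> forall j, c j = 0.

Definition inV (u : Zn n) : Prop :=
  exists c : 'I_m -> R, forall i : 'I_n, (u i)%:~R = \sum_(j < m) c j * (a j i)%:~R.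

Definition inCone (u : Zn n) : Prop :=
  exists c : 'I_m -> R, (forall j, 0 <= c j) /\
    forall i : 'I_n, (u i)%:~R = \sum_(j < m) c j * (a j i)%:~R.

(* M = V_Z  ∩ C(A)  (u ranges over Z^n, so V ∩ Z^n is automatic) *)
Definition inM (u : Zn n) : bool := `[< inV u /\ inCone u >].

Definition Mty := {u : Zn n | inM u}.
HB.instance Definition _ := Choice.on Mty.

Lemma inM_shift (u : Mty) (j : 'I_m) : inM (val u + a j).
Proof.
case: u => u /= /asboolP [[c Hc] [d [Hd0 Hd]]].
apply/asboolP; split.
- exists (fun k => c k + (k == j)%:R) => i.
  rewrite ffunE rmorphD /= Hc.
  under [in RHS]eq_bigr => k _ do rewrite mulrDl.
  rewrite big_split /=; congr (_ + _).
  rewrite (bigD1 j) //= eqxx mul1r big1 ?addr0 // => k /negbTE ->.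
  by rewrite mul0r.
- exists (fun k => d k + (k == j)%:R); split.
    by move=> k; apply: addr_ge0; rewrite ?ler0n.
  move=> i; rewrite ffunE rmorphD /= Hd.
  under [in RHS]eq_bigr => k _ do rewrite mulrDl.
  rewrite big_split /=; congr (_ + _).
  rewrite (bigD1 j) //= eqxx mul1r big1 ?addr0 // => k /negbTE ->.
  by rewrite mul0r.
Qed.

Definition shiftM (u : Mty) (j : 'I_m) : Mty := exist (fun v => inM v) _ (inM_shift u j).

Variable ell : 'I_m -> nat.

Local Notation C := (complex R).

(* S_0 = C-span of the monomials x^u, u in M *)
Definition S0 := {malg C[Mty]}.

Definition D0_mon (i : 'I_n) (u : Mty) : S0 :=
  << ((val u) i)%:~R *g u >> +
  \sum_(j < m) << ((ell j)%:R * ((a j) i)%:~R) *g shiftM u j >>.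

Definition D0 (i : 'I_n) (s : S0) : S0 :=
  \sum_(u <- msupp s) s@_u *: D0_mon i u.

Variable Y : lmodType C.

(* Hom_C(W_0, Y), W_0 = S_0 / sum_i D_{i,0} S_0, realised as the C-linear maps
   S_0 -> Y vanishing on sum_i D_{i,0} S_0 *)
Definition homW0 (phi : S0 -> Y) : Prop :=
  (forall (c : C) (s t : S0), phi (c *: s + t) = c *: phi s + phi t) /\
  (forall s : 'I_n -> S0, phi (\sum_(i < n) D0 i (s i)) = 0).

(* R_0(Y): formal sums  xi = sum_{u in M} A_u x^{-u}, i.e. coefficient families *)
Definition R0 := Mty -> Y.

Definition D0star (i : 'I_n) (xi : R0) : R0 :=
  fun v => ((val v) i)%:~R *: xi v +
           \sum_(j < m) ((ell j)%:R * ((a j) i)%:~R) *: xi (shiftM v j).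

Definition K0 (xi : R0) : Prop := forall i : 'I_n, D0star i xi = (fun _ => 0).

Definition pairing (xi : R0) (s : S0) : Y := \sum_(u <- msupp s) s@_u *: xi u.

End Setup.

From HB Require Import structures.
From mathcomp Require Import all_boot all_order all_algebra.
From mathcomp Require Import boolp reals.
From mathcomp Require Import complex.
From mathcomp Require Import finmap monalg.
Import GRing.Theory.
Local Open Scope ring_scope.
Set Implicit Arguments.
Unset Strict Implicit.

(** Pairing against coefficient families identifies [K -> Y] with the linear
    maps [{malg C[K]} -> Y], a linear map being determined by its values on
    the monomials.  [D*_{i,0}] is the transpose of [D_{i,0}] for this pairing,
    so [xi] is killed by every [D*_{i,0}] exactly when pairing with [xi]
    vanishes on [sum_i D_{i,0} S_0], i.e. factors through [W_0]. *)

Section MalgPairing.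
Variables (K : choiceType) (C : nzRingType) (Y : lmodType C).

Definition malg_pair (f : K -> Y) (s : {malg C[K]}) : Y :=
  \sum_(u <- msupp s) s@_u *: f u.

Lemma malg_pairEw f s (dom : {fset K}) : (msupp s `<=` dom)%fset ->
  malg_pair f s = \sum_(u <- dom) s@_u *: f u.
Proof.
move=> le_s_dom; rewrite /malg_pair (big_fset_incl _ le_s_dom) // => u _.
by move/mcoeff_outdom ->; rewrite scale0r.
Qed.

Lemma malg_pair0 f : malg_pair f 0 = 0.
Proof. by rewrite /malg_pair msupp0 big_seq_fset0. Qed.

Lemma malg_pair0l s : malg_pair (fun=> 0) s = 0.
Proof. by rewrite /malg_pair big1 // => u _; rewrite scaler0. Qed.

Lemma malg_pairD f s t : malg_pair f (s + t) = malg_pair f s + malg_pair f t.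
Proof.
set dom := (msupp s `|` msupp t)%fset.
rewrite !(@malg_pairEw f _ dom) ?msuppD_le ?fsubsetUl ?fsubsetUr //.
by rewrite -big_split; apply: eq_bigr => u _; rewrite mcoeffD scalerDl.
Qed.

Lemma malg_pairZ f c s : malg_pair f (c *: s) = c *: malg_pair f s.
Proof.
rewrite (@malg_pairEw f _ (msupp s)) ?msuppZ_le // scaler_sumr.
by apply: eq_bigr => u _; rewrite mcoeffZ scalerA.
Qed.

Lemma malg_pair_sum f (I : Type) (r : seq I) (P : pred I) (F : I -> {malg C[K]}) :
  malg_pair f (\sum_(i <- r | P i) F i) = \sum_(i <- r | P i) malg_pair f (F i).
Proof. exact: (big_morph _ (malg_pairD f) (malg_pair0 f)). Qed.

Lemma malg_pairU f c u : malg_pair f << c *g u >> = c *: f u.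
Proof. by rewrite (malg_pairEw _ msuppU_le) big_seq_fset1 mcoeffUU. Qed.

Lemma malg_pair1U f u : malg_pair f << u >> = f u.
Proof. by rewrite malg_pairU scale1r. Qed.

Lemma malg_pair_inj f g : malg_pair f =1 malg_pair g -> f = g.
Proof. by move=> eq_fg; apply: funext => u; rewrite -!malg_pair1U. Qed.

Lemma malg_pair_extend f (T : K -> {malg C[K]}) s :
  malg_pair f (\sum_(u <- msupp s) s@_u *: T u)
  = malg_pair (fun u => malg_pair f (T u)) s.
Proof. by rewrite malg_pair_sum; apply: eq_bigr => u _; rewrite malg_pairZ. Qed.

Lemma malgUZ c u : << c *g u >> = c *: << u >> :> {malg C[K]}.
Proof.
apply/malgP => k; rewrite mcoeffZ !mcoeffU.
by case: (u == k); rewrite ?mulr1 ?mulr0.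
Qed.

Section LinearMap.
Variable phi : {malg C[K]} -> Y.
Hypothesis phi_lin : forall c s t, phi (c *: s + t) = c *: phi s + phi t.

Lemma lin_phi0 : phi 0 = 0.
Proof.
have := phi_lin 1 0 0; rewrite scaler0 add0r scale1r => /eqP.
by rewrite -subr_eq subrr eq_sym => /eqP.
Qed.

Lemma lin_phiD s t : phi (s + t) = phi s + phi t.
Proof. by have := phi_lin 1 s t; rewrite !scale1r. Qed.

Lemma lin_phiZ c s : phi (c *: s) = c *: phi s.
Proof. by have := phi_lin c s 0; rewrite !addr0 lin_phi0 addr0. Qed.

Lemma malg_pair_lin s : phi s = malg_pair (fun u => phi << u >>) s.
Proof.
rewrite {1}(monalgE s) (big_morph _ lin_phiD lin_phi0).
by apply: eq_bigr => u _; rewrite malgUZ lin_phiZ.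
Qed.

End LinearMap.
End MalgPairing.

Lemma malg_pairDl (K : choiceType) (C : comNzRingType) (Y : lmodType C)
    (c : C) (f g : K -> Y) (s : {malg C[K]}) :
  malg_pair (fun u => c *: f u + g u) s = c *: malg_pair f s + malg_pair g s.
Proof.
rewrite /malg_pair scaler_sumr -big_split; apply: eq_bigr => u _.
by rewrite scalerDr !scalerA mulrC.
Qed.

Section Duality.
Variables (R : realType) (n m : nat) (a : 'I_m -> Zn n) (ell : 'I_m -> nat).
Variable Y : lmodType (complex R).

Lemma pairingE (xi : R0 a Y) : pairing xi = malg_pair xi.
Proof. by []. Qed.

Lemma pairing_D0_mon (xi : R0 a Y) i u :
  pairing xi (D0_mon ell i u) = D0star ell i xi u.
Proof.
rewrite pairingE malg_pairD malg_pairU malg_pair_sum.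
by congr (_ + _); apply: eq_bigr => j _; rewrite malg_pairU.
Qed.

Lemma pairing_D0 (xi : R0 a Y) i s :
  pairing xi (D0 ell i s) = pairing (D0star ell i xi) s.
Proof.
rewrite pairingE malg_pair_extend pairingE.
by congr malg_pair; apply: funext => u; apply: pairing_D0_mon.
Qed.

Lemma homW0_D0 (phi : S0 R a -> Y) i s : homW0 ell phi -> phi (D0 ell i s) = 0.
Proof.
move=> [_ phi_D0]; rewrite -(phi_D0 (fun k => if k == i then s else 0)).
rewrite (bigD1 i) //= eqxx big1 ?addr0 // => k /negbTE ->.
by rewrite /D0 msupp0 big_seq_fset0.
Qed.

Lemma K0_homW0 (xi : R0 a Y) : K0 ell xi -> homW0 ell (pairing xi).
Proof.
move=> xiK; split=> [c s t | s].
  by rewrite pairingE malg_pairD malg_pairZ.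
rewrite pairingE malg_pair_sum big1 // => i _.
by rewrite -pairingE pairing_D0 xiK; apply: malg_pair0l.
Qed.

Lemma homW0_K0 (phi : S0 R a -> Y) :
  homW0 ell phi -> K0 ell (fun u => phi << u >>).
Proof.
move=> phiW; have [phi_lin _] := phiW; move=> i; apply: funext => v.
rewrite -[LHS](malg_pair1U (D0star ell i _)) -pairingE -pairing_D0.
by rewrite pairingE -malg_pair_lin // homW0_D0.
Qed.

End Duality.

Theorem proposition2p9 (R : realType) (n m : nat) (a : 'I_m -> Zn n)
    (ell : 'I_m -> nat) (a0 : Zn n)
    (Hind : lin_indep R a)
    (Hpos : forall j, (0 < ell j)%N)
    (Hrel : forall i : 'I_n,
        ((\sum_(j < m) ell j)%:Z * a0 i = \sum_(j < m) (ell j)%:Z * a j i)%R)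
    (Hgcd : gcdn (\sum_(j < m) ell j) (\big[gcdn/0%N]_(j < m) ell j) = 1%N)
    (Y : lmodType (complex R)) :
  (* the pairing map xi |-> < xi , - > is C-linear *)
  (forall (c : complex R) (xi eta : @R0 R n m a Y) (s : S0 R a),
      pairing (fun u => c *: xi u + eta u) s
      = c *: pairing xi s + pairing eta s) /\
  (* it sends K_0(Y) into Hom_C(W_0, Y) *)
  (forall xi : @R0 R n m a Y, K0 ell xi -> homW0 ell (pairing xi)) /\
  (* and every element of Hom_C(W_0, Y) comes from a unique xi in K_0(Y) *)
  (forall phi : S0 R a -> Y, homW0 ell phi ->
      exists! xi : @R0 R n m a Y, K0 ell xi /\ forall s, phi s = pairing xi s).
Proof.
split; first exact: malg_pairDl.
split; first exact: K0_homW0.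
move=> phi phiW; have [phi_lin _] := phiW.
exists (fun u => phi << u >>); split.
  by split=> [|s]; [exact: homW0_K0 | exact: malg_pair_lin].
move=> xi [_ phi_xi]; apply: malg_pair_inj => s.
by rewrite -(malg_pair_lin phi_lin); apply: phi_xi.
Qed.
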